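(* Let $\phi_0:\mathcal{F}_{\eta_1,\lambda}\to\mathcal{F}_{\eta_2,\lambda}$ be a Virasoro-module homomorphism, i.e. $[L_m,\phi_0]=0$ for all $m\in\mathbb{Z}$, where $\eta_1\neq\eta_2$. Put $k_\phi=\eta_2-\eta_1$ and $$\phi_n=\frac{1}{k_\phi}[\alpha_n,\phi_0]\qquad(n\in\mathbb{Z}).$$ Then: 1. The $n=0$ case recovers the original map: $\frac{1}{k_\phi}[\alpha_0,\phi_0]=\phi_0$. 2. For all $m,n\in\mathbb{Z}$, $[L_m,\phi_n]=-n\,\phi_{m+n}$. 3. Consequently, for all $m,n\in\mathbb{Z}$, $$[L_m,\phi_n]-[L_n,\phi_m]=(m-n)\,\phi_{m+n}.$$ 4. The operators $L_n\mapsto\begin{pmatrix}L_n&\phi_n\\0&L_n\end{pmatrix}$ define a representation of the Virasoro algebra, of central charge $1-12\lambda^2$, on $\mathcal{F}_{\eta_2,\lambda}\oplus\mathcal{F}_{\eta_1,\lambda}$.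
   Context: The Heisenberg algebra has modes $\alpha_n$ ($n\in\mathbb{Z}$) with $[\alpha_m,\alpha_n]=m\delta_{m,-n}$. $\mathcal{F}_\eta$ is the Fock space generated by a vacuum $|\eta\rangle$ with $\alpha_n|\eta\rangle=0$ for $n>0$ and $\alpha_0|\eta\rangle=\eta|\eta\rangle$; $\alpha_0$ acts on all of $\mathcal{F}_\eta$ as the scalar $\eta$. $\mathcal{F}_{\eta,\lambda}$ denotes $\mathcal{F}_\eta$ with the Virasoro action $$L_n=\tfrac12\sum_k:\alpha_k\alpha_{n-k}:-\lambda(n+1)\alpha_n,$$ where normal ordering places positive-index modes to the right. In $[\alpha_n,\phi_0]=\alpha_n\phi_0-\phi_0\alpha_n$, the mode $\alpha_n$ acts on the target space in the first term and on the source space in the second. The matrix in part 4 means $L_n(u,w)=(L_nu+\phi_nw,\,L_nw)$. *)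

From HB Require Import structures.
From mathcomp Require Import all_boot all_order all_algebra.
Set Implicit Arguments. Unset Strict Implicit. Unset Printing Implicit Defensive.
Import Order.TTheory GRing.Theory Num.Theory.
Local Open Scope ring_scope.

Section Fock.
Variable R : fieldType.

(* V, with modes alpha : int -> V -> V and vacuum vac, is the Fock space F_eta:
   alpha_n linear, Heisenberg relations [a_m,a_n] = m delta_{m,-n},
   a_n vac = 0 for n > 0, a_0 acts as the scalar eta on all of V,
   and V is generated (spanned) by the vectors a_{-n1} ... a_{-nk} vac. *)
Definition heis_fock (V : lmodType R) (eta : R) (alpha : int -> V -> V) (vac : V)
  : Prop :=
  [/\ (forall n a u v, alpha n (a *: u + v) = a *: alpha n u + alpha n v),
      (forall m n v, alpha m (alpha n v) - alpha n (alpha m v)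
                     = if m + n == 0 then m%:~R *: v else 0),
      (forall n : int, 0 < n -> alpha n vac = 0),
      (forall v, alpha 0 v = eta *: v)
    & (forall v, exists s : seq (R * seq nat),
          v = \sum_(p <- s) p.1 *: foldr (fun k w => alpha (- (k.+1)%:Z) w) vac p.2)].

Definition nord (V : lmodType R) (alpha : int -> V -> V) (a b : int) (v : V) : V :=
  if 0 < a then alpha b (alpha a v) else alpha a (alpha b v).

(* truncation of L_n v = 1/2 sum_k :a_k a_{n-k}: v - lam (n+1) a_n v
   to the range -N <= k <= N *)
Definition vir_trunc (V : lmodType R) (alpha : int -> V -> V) (lam : R)
    (N : nat) (n : int) (v : V) : V :=
  2%:R^-1 *: (\sum_(i < (2 * N).+1)
                 nord alpha (i%:Z - N%:Z) (n - (i%:Z - N%:Z)) v)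
  - (lam * (n + 1)%:~R) *: alpha n v.

(* L is the Virasoro action on F_{eta,lam}: for every v the (finite, in the
   sense of eventually constant) infinite sum defining L_n v has value L n v. *)
Definition vir_action (V : lmodType R) (alpha : int -> V -> V) (lam : R)
    (L : int -> V -> V) : Prop :=
  forall n v, exists N0 : nat, forall N : nat, (N0 <= N)%N ->
      L n v = vir_trunc alpha lam N n v.

Definition vir_rep (W : lmodType R) (c : R) (L : int -> W -> W) : Prop :=
  (forall n a u v, L n (a *: u + v) = a *: L n u + L n v) /\
  (forall m n w, L m (L n w) - L n (L m w)
      = (m - n)%:~R *: L (m + n) w
        + (if m + n == 0 then (c / 12%:R * (m ^+ 3 - m)%:~R) *: w else 0)).

End Fock.

(* Every Fock space F_{eta,lam} is a Virasoro module of central charge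
   1 - 12 lam^2: the defect D_{m,n} = [L_m, L_n] - (m - n) L_{m+n} - (central term)
   commutes with all modes alpha_k, so it vanishes once it kills the vacuum, which
   is checked by an L_0-weight argument for m + n <> 0 and by computing
   L_m L_{-m} vac otherwise.
   The relation [L_m, alpha_n] = -n alpha_{m+n} + (a scalar depending only on m, n
   and lam) gives [L_m, [alpha_n, phi0]] = -n [alpha_{m+n}, phi0] for an
   intertwiner phi0, since the scalar terms cancel; and [alpha_0, phi0] =
   (eta2 - eta1) phi0 because alpha_0 acts by eta.  The resulting relation
   [L_m, phi_n] - [L_n, phi_m] = (m - n) phi_{m+n} is exactly what makes the upper
   triangular block operators a representation. *)

From HB Require Import structures.
From mathcomp Require Import all_boot all_order all_algebra.
From mathcomp Require Import ring zify.
Set Implicit Arguments. Unset Strict Implicit. Unset Printing Implicit Defensive.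
Import Order.TTheory GRing.Theory Num.Theory.
Local Open Scope ring_scope.

Section SquareZeroExtension.
Variables (R : comNzRingType) (V : lmodType R).

Definition sqz := (R * V)%type.
HB.instance Definition _ := GRing.Zmodule.on sqz.

Definition sqz_one : sqz := (1, 0).
Definition sqz_mul (x y : sqz) : sqz := (x.1 * y.1, x.1 *: y.2 + y.1 *: x.2).

Lemma sqz_mulA : associative sqz_mul.
Proof.
move=> [a u] [b v] [c w]; rewrite /sqz_mul /=; congr pair; first by rewrite mulrA.
by rewrite !scalerDr !scalerA addrA [c * a]mulrC [c * b]mulrC [b * c]mulrC [a * b]mulrC.
Qed.

Lemma sqz_mulC : commutative sqz_mul.
Proof. by move=> [a u] [b v]; rewrite /sqz_mul /= mulrC addrC. Qed.

Lemma sqz_mul1 : left_id sqz_one sqz_mul.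
Proof. by move=> [a u]; rewrite /sqz_mul /= mul1r scale1r scaler0 addr0. Qed.

Lemma sqz_mulDl : left_distributive sqz_mul +%R.
Proof.
move=> [a u] [b v] [c w]; rewrite /sqz_mul /=; congr pair; first by rewrite mulrDl.
by rewrite scalerDl scalerDr addrACA.
Qed.

Lemma sqz_one_neq0 : sqz_one != 0.
Proof. by apply/negP => /eqP [] /eqP; rewrite oner_eq0. Qed.

HB.instance Definition _ := GRing.Zmodule_isComNzRing.Build sqz
  sqz_mulA sqz_mulC sqz_mul1 sqz_mulDl sqz_one_neq0.

Definition sqz_scalar (a : R) : sqz := (a, 0).
Definition sqz_vec (v : V) : sqz := (0, v).

Lemma sqz_scalar_is_zmod_morphism : zmod_morphism sqz_scalar.
Proof. by move=> a b; rewrite /sqz_scalar; congr pair; rewrite subrr. Qed.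
HB.instance Definition _ := GRing.isZmodMorphism.Build R sqz sqz_scalar
  sqz_scalar_is_zmod_morphism.

Lemma sqz_scalar_is_monoid_morphism : monoid_morphism sqz_scalar.
Proof. by split=> // a b; rewrite /sqz_scalar; congr pair; rewrite /= !scaler0 addr0. Qed.
HB.instance Definition _ := GRing.isMonoidMorphism.Build R sqz sqz_scalar
  sqz_scalar_is_monoid_morphism.

Lemma sqz_vec_inj : injective sqz_vec. Proof. by move=> u v []. Qed.

Lemma sqz_vec_is_zmod_morphism : zmod_morphism sqz_vec.
Proof. by move=> u v; rewrite /sqz_vec; congr pair; rewrite subrr. Qed.
HB.instance Definition _ := GRing.isZmodMorphism.Build V sqz sqz_vec
  sqz_vec_is_zmod_morphism.

Lemma sqz_vecZ (a : R) (v : V) : sqz_vec (a *: v) = sqz_scalar a * sqz_vec v.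
Proof.
by rewrite /sqz_vec /sqz_scalar; congr pair; rewrite /= ?mulr0 // scaler0 addr0.
Qed.

(* Restated for plain applications of sqz_vec: after rewriting with raddfD itself,
   sqz_vecZ no longer matches. *)
Lemma sqz_vecD u v : sqz_vec (u + v) = sqz_vec u + sqz_vec v. Proof. exact: raddfD. Qed.
Lemma sqz_vecB u v : sqz_vec (u - v) = sqz_vec u - sqz_vec v. Proof. exact: raddfB. Qed.
Lemma sqz_vecN v : sqz_vec (- v) = - sqz_vec v. Proof. exact: raddfN. Qed.
Lemma sqz_vec0 : sqz_vec 0 = 0. Proof. exact: raddf0. Qed.

Definition sqz_vecE := (sqz_vecD, sqz_vecB, sqz_vecN, sqz_vec0, sqz_vecZ).

End SquareZeroExtension.

(* Embedding V into the square-zero extension R ⋉ V turns linear combinations of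
   vectors into ring expressions, so that [ring] decides identities in a module. *)
Ltac lmod_ring := apply: sqz_vec_inj; rewrite !sqz_vecE; ring.

Section LinearMaps.
Variables (R : pzRingType) (U W : lmodType R) (f : U -> W).
Hypothesis f_lin : linear f.

Lemma linfB : {morph f : u v / u - v}.
Proof. exact: zmod_morphism_linear f_lin. Qed.

Lemma linf0 : f 0 = 0.
Proof. by rewrite -(subrr 0) linfB subrr. Qed.

Lemma linfN : {morph f : u / - u}.
Proof. by move=> u; rewrite -sub0r linfB linf0 sub0r. Qed.

Lemma linfD : {morph f : u v / u + v}.
Proof. by move=> u v; rewrite -{1}[v]opprK linfB linfN opprK. Qed.

Lemma linfZ a : {morph f : u / a *: u}.
Proof. exact: scalable_linear f_lin a. Qed.

Lemma linf_sum (I : Type) (r : seq I) (P : pred I) (F : I -> U) :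
  f (\sum_(i <- r | P i) F i) = \sum_(i <- r | P i) f (F i).
Proof. exact: (big_morph f linfD linf0). Qed.

End LinearMaps.

Section WindowSums.
Variables (W : zmodType) (N : nat).

Lemma big_window_pick (k0 : int) (F : int -> W) :
  - (N%:Z) <= k0 -> k0 <= N%:Z ->
  \sum_(i < (2 * N).+1) (if i%:Z - N%:Z == k0 then F (i%:Z - N%:Z) else 0) = F k0.
Proof.
move=> lo hi; have lt_k0 : (absz (k0 + N%:Z)%R < (2 * N).+1)%N by lia.
have -> : F k0 = F ((Ordinal lt_k0)%:Z - N%:Z) by congr F; rewrite /=; lia.
rewrite (bigD1 (Ordinal lt_k0)) //= ifT; last by apply/eqP; lia.
rewrite big1 ?addr0 // => j /eqP ne_j; rewrite ifF //; apply/eqP => e.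
by apply: ne_j; apply: val_inj => /=; lia.
Qed.

Lemma big_window_restrict (m : nat) (F : int -> W) : (m <= N)%N ->
  \sum_(i < (2 * N).+1) (if (- m%:Z <= i%:Z - N%:Z) && (i%:Z - N%:Z <= 0)
                         then F (i%:Z - N%:Z) else 0)
  = \sum_(j < m.+1) F (j%:Z - m%:Z).
Proof.
move=> le_mN.
pose f i : W := if (- m%:Z <= i%:Z - N%:Z) && (i%:Z - N%:Z <= 0)
                then F (i%:Z - N%:Z) else 0.
rewrite -(big_mkord xpredT f) (@big_cat_nat _ _ _ (N - m)) //=; last lia.
rewrite (@big_cat_nat _ _ _ N.+1 (N - m)) //=; try lia.
have -> : \sum_(0 <= i < N - m) f i = 0.
  by rewrite big_nat_cond big1 // => i /andP[/andP[_ ?] _]; rewrite /f ifF //; lia.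
have -> : \sum_(N.+1 <= i < (2 * N).+1) f i = 0.
  by rewrite big_nat_cond big1 // => i /andP[/andP[? _] _]; rewrite /f ifF //; lia.
rewrite add0r addr0 -{1}(add0n (N - m)%N) big_addn.
have -> : (N.+1 - (N - m) = m.+1)%N by lia.
rewrite big_mkord; apply: eq_bigr => j _; have := ltn_ord j => lt_j.
have e : (j + (N - m))%N%:Z - N%:Z = j%:Z - m%:Z by lia.
by rewrite /f e ifT //; lia.
Qed.

End WindowSums.

Lemma sum_int_id (m : nat) : 2 * \sum_(j < m.+1) (j%:Z) = m%:Z * (m%:Z + 1).
Proof. by elim: m => [|m IH]; rewrite ?big_ord1 // big_ord_recr /= mulrDr IH; lia. Qed.

Lemma sum_int_mul_compl (m : nat) :
  6 * \sum_(j < m.+1) ((m%:Z - j%:Z) * j%:Z) = m%:Z ^+ 3 - m%:Z.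
Proof.
elim: m => [|m IH]; first by rewrite big_ord1.
rewrite big_ord_recr /= (eq_bigr (fun j : 'I_m.+1 => (m%:Z - j%:Z) * j%:Z + j%:Z));
  last by move=> j _; lia.
rewrite big_split /= !mulrDr IH.
have -> : 6 * \sum_(j < m.+1) j%:Z = 3 * (2 * \sum_(j < m.+1) j%:Z) by rewrite mulrA.
rewrite sum_int_id !exprS expr0 !mulr1; nia.
Qed.

Lemma intr_eq0_pchar0 (R : idomainType) : [pchar R] =i pred0 ->
  forall z : int, (z%:~R == 0 :> R) = (z == 0).
Proof.
move/pcharf0P => natf_eq0 [n|n]; first exact: natf_eq0.
by rewrite NegzE intrN oppr_eq0 [_ == 0]natf_eq0.
Qed.

Definition heis_coef (R : ringType) (m n : int) : R := if m + n == 0 then m%:~R else 0.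

Section FockVirasoro.
Variables (R : fieldType) (V : lmodType R) (eta lam : R)
  (alpha : int -> V -> V) (vac : V) (L : int -> V -> V).
Hypothesis fockV : heis_fock eta alpha vac.
Hypothesis virL : vir_action alpha lam L.

Lemma alpha_lin n : linear (alpha n).
Proof. by move=> a u v; case: fockV => alpha_lin _ _ _ _; apply: alpha_lin. Qed.

Let alpha0 n := linf0 (alpha_lin n).
Let alphaD n := linfD (alpha_lin n).
Let alphaB n := linfB (alpha_lin n).
Let alphaN n := linfN (alpha_lin n).
Let alphaZ n := linfZ (alpha_lin n).

Lemma alphaC m n v : alpha m (alpha n v) = alpha n (alpha m v) + heis_coef R m n *: v.
Proof.
case: fockV => _ comm _ _ _; have /eqP := comm m n v; rewrite /heis_coef subr_eq.
by case: ifP => _ /eqP ->; rewrite ?scale0r // addrC.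
Qed.

Lemma alpha_vac n : 0 < n -> alpha n vac = 0.
Proof. by case: fockV => _ _ vac_ann _ _; apply: vac_ann. Qed.

Lemma alpha_zero v : alpha 0 v = eta *: v. Proof. by case: fockV. Qed.

Lemma nord_lin x y : linear (nord alpha x y).
Proof. by move=> a u v; rewrite /nord; case: ifP => _; rewrite !alpha_lin. Qed.

Lemma vir_trunc_lin N n : linear (vir_trunc alpha lam N n).
Proof.
move=> a u v; rewrite /vir_trunc (eq_bigr _ (fun i _ => nord_lin _ _ a u v)).
by rewrite big_split /= -scaler_sumr alpha_lin; lmod_ring.
Qed.

Lemma vir_action_cutoff n1 n2 v1 v2 M : exists N,
  [/\ (M <= N)%N, L n1 v1 = vir_trunc alpha lam N n1 v1
                & L n2 v2 = vir_trunc alpha lam N n2 v2].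
Proof.
have [N1 H1] := virL n1 v1; have [N2 H2] := virL n2 v2.
by exists (maxn M (maxn N1 N2)); split; [|apply: H1|apply: H2]; lia.
Qed.

Lemma L_lin n : linear (L n).
Proof.
move=> a u v; have [N0 trunc_uv] := virL n (a *: u + v).
have [N [le_N0 -> ->]] := vir_action_cutoff n n u v N0.
by rewrite (trunc_uv N le_N0) vir_trunc_lin.
Qed.

Let L0 n := linf0 (L_lin n).
Let LD n := linfD (L_lin n).
Let LB n := linfB (L_lin n).
Let LN n := linfN (L_lin n).
Let LZ n := linfZ (L_lin n).
Let L_sum n := linf_sum (L_lin n).

Lemma alpha_nord n x y w : alpha n (nord alpha x y w) =
  nord alpha x y (alpha n w) + heis_coef R n x *: alpha y w + heis_coef R n y *: alpha x w.
Proof.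
rewrite /nord; case: ifP => _;
  [rewrite (alphaC n y) (alphaC n x) | rewrite (alphaC n x) (alphaC n y)];
  by rewrite alphaD alphaZ; lmod_ring.
Qed.

Hypothesis charR : [pchar R] =i pred0.

Lemma natr_neq0 k : (0 < k)%N -> k%:R != 0 :> R.
Proof. by move/pcharf0P: charR => ->; rewrite -lt0n. Qed.

Lemma scale_half_double (x y : V) : 2%:R^-1 *: (x + y + y) = 2%:R^-1 *: x + y.
Proof. by rewrite -addrA -mulr2n -scaler_nat scalerDr scalerA mulVf ?natr_neq0 ?scale1r. Qed.

Lemma L_alpha m n w : L m (alpha n w) =
  alpha n (L m w) - n%:~R *: alpha (m + n) w + (lam * (m + 1)%:~R * heis_coef R n m) *: w.
Proof.
have [N [le_N -> ->]] := vir_action_cutoff m m (alpha n w) w (absz n + absz (m + n)).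
rewrite /vir_trunc alphaB !alphaZ (linf_sum (alpha_lin n)).
rewrite (eq_bigr _ (fun i _ => alpha_nord _ _ _ _)) !big_split /=.
have -> : \sum_(i < (2 * N).+1) heis_coef R n (i%:Z - N%:Z) *: alpha (m - (i%:Z - N%:Z)) w
   = \sum_(i < (2 * N).+1) (if i%:Z - N%:Z == - n then
        (fun k => n%:~R *: alpha (m - k) w) (i%:Z - N%:Z) else 0).
  apply: eq_bigr => i _; rewrite /heis_coef.
  have -> : (n + (i%:Z - N%:Z) == 0) = (i%:Z - N%:Z == - n) by apply/eqP/eqP; lia.
  by case: ifP => _; rewrite ?scale0r.
have -> : \sum_(i < (2 * N).+1) heis_coef R n (m - (i%:Z - N%:Z)) *: alpha (i%:Z - N%:Z) w
   = \sum_(i < (2 * N).+1) (if i%:Z - N%:Z == m + n then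
        (fun k => n%:~R *: alpha k w) (i%:Z - N%:Z) else 0).
  apply: eq_bigr => i _; rewrite /heis_coef.
  have -> : (n + (m - (i%:Z - N%:Z)) == 0) = (i%:Z - N%:Z == m + n) by apply/eqP/eqP; lia.
  by case: ifP => _; rewrite ?scale0r.
rewrite (@big_window_pick _ N (- n) (fun k => n%:~R *: alpha (m - k) w)); try lia.
rewrite (@big_window_pick _ N (m + n) (fun k => n%:~R *: alpha k w)); try lia.
by rewrite opprK scale_half_double (alphaC n m w); lmod_ring.
Qed.

Definition singular (w : V) := forall j, 0 < j -> alpha j w = 0.

Definition vac_weight : R := 2%:R^-1 * (eta * eta) - lam * eta.

Lemma L0_singular w : singular w -> L 0 w = vac_weight *: w.
Proof.
move=> sing_w; have [N0 trunc_w] := virL 0 w; rewrite (trunc_w N0) // /vir_trunc.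
have -> : \sum_(i < (2 * N0).+1) nord alpha (i%:Z - N0%:Z) (0 - (i%:Z - N0%:Z)) w
   = \sum_(i < (2 * N0).+1) (if i%:Z - N0%:Z == 0 then
        (fun _ => (eta * eta) *: w) (i%:Z - N0%:Z) else 0).
  apply: eq_bigr => i _; rewrite /nord; case: (ltrgt0P (i%:Z - N0%:Z)) => [k_gt0|k_lt0|->].
  - by rewrite sing_w // alpha0.
  - by rewrite sing_w ?alpha0 // subr_gt0.
  - by rewrite subrr !alpha_zero scalerA.
rewrite (@big_window_pick _ N0 0 (fun _ => (eta * eta) *: w)); try lia.
by rewrite alpha_zero /vac_weight; lmod_ring.
Qed.

Lemma L_singular n w : 0 < n -> singular w -> L n w = 0.
Proof.
move=> n_gt0 sing_w; have [N0 trunc_w] := virL n w.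
rewrite (trunc_w N0) // /vir_trunc sing_w // scaler0 subr0.
rewrite big1 ?scaler0 // => i _; rewrite /nord; case: ifP => [k_gt0|/negbT].
  by rewrite sing_w // alpha0.
by rewrite -leNgt => k_le0; rewrite sing_w ?alpha0 // subr_gt0 (le_lt_trans k_le0 n_gt0).
Qed.

Lemma L0_alpha n w : L 0 (alpha n w) = alpha n (L 0 w) - n%:~R *: alpha n w.
Proof.
rewrite L_alpha add0r; have -> : heis_coef R n 0 = 0.
  by rewrite /heis_coef addr0; case: ifP => // /eqP ->.
by rewrite mulr0 scale0r addr0.
Qed.

Lemma L0_nord x j w : L 0 (nord alpha x (j - x) w) =
  nord alpha x (j - x) (L 0 w) - j%:~R *: nord alpha x (j - x) w.
Proof.
have -> : (j%:~R : R) = x%:~R + (j - x)%:~R by rewrite -intrD addrC subrK.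
by rewrite /nord; case: ifP => _; rewrite !L0_alpha alphaB alphaZ; lmod_ring.
Qed.

Lemma L0_L j w : L 0 (L j w) = L j (L 0 w) - j%:~R *: L j w.
Proof.
have [N [_ -> ->]] := vir_action_cutoff j j w (L 0 w) 0.
rewrite /vir_trunc LB !LZ L_sum (eq_bigr _ (fun i _ => L0_nord _ _ _)).
by rewrite big_split /= sumrN -scaler_sumr L0_alpha; lmod_ring.
Qed.

Definition vir_central (m : int) : R := (1 - 12%:R * lam ^+ 2) / 12%:R * (m ^+ 3 - m)%:~R.

Definition vir_defect m n w := L m (L n w) - L n (L m w) -
  ((m - n)%:~R *: L (m + n) w + (if m + n == 0 then vir_central m *: w else 0)).

Lemma vir_defect_lin m n : linear (vir_defect m n).
Proof. by move=> a u v; rewrite /vir_defect !(L_lin, LD, LZ); case: ifP => _; lmod_ring. Qed.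

Lemma vir_defect_alpha m n k w : vir_defect m n (alpha k w) = alpha k (vir_defect m n w).
Proof.
rewrite /vir_defect !(L_alpha, LD, LB, LZ, LN) !(alphaB, alphaD, alphaZ, alphaN).
rewrite (addrCA n m k) -(addrA m n k) /heis_coef.
have -> : (n + k + m == 0) = (m + (n + k) == 0) by apply/eqP/eqP; lia.
have -> : (m + k + n == 0) = (m + (n + k) == 0) by apply/eqP/eqP; lia.
have -> : (k + (m + n) == 0) = (m + (n + k) == 0) by apply/eqP/eqP; lia.
case: (m + (n + k) =P 0) => [mnk_eq0|_];
  last by case: (m + n == 0); rewrite ?alphaZ ?alpha0 ?scaler0; lmod_ring.
have k_eq : k = - (m + n) by lia.
by subst k; case: (m + n == 0); rewrite ?alphaZ ?alpha0 ?scaler0; lmod_ring.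
Qed.

Lemma vir_defect_antisym m n w : vir_defect m n w = - vir_defect n m w.
Proof.
rewrite /vir_defect [n + m]addrC; case: ifP => [/eqP mn_eq0|_]; last by lmod_ring.
have -> : n = - m by lia.
by rewrite /vir_central; lmod_ring.
Qed.

Lemma singular_vir_defect_vac m n : singular (vir_defect m n vac).
Proof. by move=> j j_gt0; rewrite -vir_defect_alpha alpha_vac // (linf0 (vir_defect_lin m n)). Qed.

Lemma L0_vac : L 0 vac = vac_weight *: vac.
Proof. exact: L0_singular alpha_vac. Qed.

(* D vac is singular, so L_0 acts on it by vac_weight, whereas [L_0, D_{m,n}] shifts
   the weight by -(m + n). *)
Lemma vir_defect_vac_offdiag m n : m + n != 0 -> vir_defect m n vac = 0.
Proof.
move=> mn_neq0; have := L0_singular (singular_vir_defect_vac m n).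
have -> : L 0 (vir_defect m n vac) = (vac_weight - (m + n)%:~R) *: vir_defect m n vac.
  rewrite /vir_defect (negbTE mn_neq0) !addr0 !(LB, LD, LZ, LN, L0_L) L0_vac !(LB, LD, LZ, LN).
  by lmod_ring.
move/eqP; rewrite eq_sym -subr_eq0 -scalerBl opprB addrC subrK scaler_eq0 intr_eq0_pchar0 //.
by rewrite (negbTE mn_neq0) => /eqP.
Qed.

Definition nord_vac_edge (m : int) : R := m%:~R * (eta * eta) - lam * (m * (m + 1))%:~R * eta.

(* Only -m <= k <= 0 contributes to L_m :alpha_k alpha_{-m-k}: vac; at the edges
   k = 0 and k = -m one of the two modes is alpha_0, which acts by eta. *)
Definition nord_vac_coef (m k : int) : R :=
  (if (- m <= k) && (k <= 0) then ((- k) * (m + k))%:~R else 0) +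
  (if k == 0 then nord_vac_edge m else 0) + (if k == - m then nord_vac_edge m else 0).

Lemma L_nord_vac m k : 0 < m -> L m (nord alpha k (- m - k) vac) = nord_vac_coef m k *: vac.
Proof.
move=> m_gt0; have coef0 : (0 < k) || (k < - m) -> nord_vac_coef m k = 0.
  by move=> k_out; rewrite /nord_vac_coef !ifF ?addr0 //; apply/negbTE; lia.
rewrite /nord; case: ifP => k_gt0.
  by rewrite alpha_vac // alpha0 L0 coef0 ?k_gt0 // scale0r.
have [k_lt|k_ge] := ltP k (- m).
  by rewrite (alpha_vac (n := - m - k)) ?alpha0 ?L0 ?coef0 ?k_lt ?orbT ?scale0r //; lia.
have e : m + (- m - k) = - k by lia.
rewrite !L_alpha (L_singular m_gt0 alpha_vac) alpha0 add0r e /nord_vac_coef ifT; last lia.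
case: (ltrgt0P k) => [|k_lt0|->]; first lia.
- have [->|k_neq] := eqVneq k (- m).
    have -> : - m - - m = 0 by rewrite subrr.
    rewrite opprK (alpha_vac m_gt0) scaler0 oppr0 add0r subrr !alpha_zero alphaZ.
    rewrite /heis_coef add0r addNr eqxx ifF; last by apply/negbTE; lia.
    by rewrite /nord_vac_edge; lmod_ring.
  rewrite (alpha_vac (n := - k)) ?oppr_gt0 // scaler0 oppr0 add0r.
  rewrite (alphaC (m + k)) (alpha_vac (n := m + k)); last lia.
  have -> : heis_coef R (- m - k) m = 0 by rewrite /heis_coef ifF //; lia.
  have -> : heis_coef R k m = 0 by rewrite /heis_coef ifF //; lia.
  have -> : heis_coef R (m + k) (- m - k) = (m + k)%:~R by rewrite /heis_coef ifT //; lia.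
  by rewrite alpha0 add0r alphaZ; lmod_ring.
- rewrite subr0 oppr0 !alpha_zero /heis_coef addNr eqxx add0r ifF; last by apply/negbTE; lia.
  by rewrite ifF; [rewrite /nord_vac_edge; lmod_ring | apply/negbTE; lia].
Qed.

Lemma L_Lneg_vac (m : nat) : (0 < m)%N ->
  L m%:Z (L (- m%:Z) vac) = ((m%:Z - - m%:Z)%:~R * vac_weight + vir_central m) *: vac.
Proof.
move=> m_gt0; have m_gt0' : 0 < m%:Z by lia.
have [N [le_mN -> _]] := vir_action_cutoff (- m%:Z) 0 vac vac m.
rewrite /vir_trunc LB !LZ L_sum.
rewrite (eq_bigr _ (fun (i : 'I_(2 * N).+1) _ => L_nord_vac (i%:Z - N%:Z) m_gt0')).
rewrite -scaler_suml /nord_vac_coef !big_split /=.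
rewrite (big_window_restrict (fun k => ((- k) * (m%:Z + k))%:~R) le_mN).
rewrite (big_window_pick (fun _ => nord_vac_edge m)); try lia.
rewrite (big_window_pick (fun _ => nord_vac_edge m)); try lia.
have -> : \sum_(j < m.+1) ((- (j%:Z - m%:Z)) * (m%:Z + (j%:Z - m%:Z)))%:~R
          = (m%:Z ^+ 3 - m%:Z)%:~R / 6%:R :> R.
  rewrite -sum_int_mul_compl intrM mulrC mulKf ?natr_neq0 //.
  rewrite (big_morph _ (@intrD R) (mulr0z 1)); apply: eq_bigr => j _.
  by congr _%:~R; lia.
rewrite L_alpha (L_singular m_gt0' alpha_vac) alpha0 add0r subrr alpha_zero.
rewrite /heis_coef addNr eqxx.
transitivity ((2%:R^-1 * ((m%:Z ^+ 3 - m%:Z)%:~R / 6%:R + nord_vac_edge m + nord_vac_edge m)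
   - lam * (- m%:Z + 1)%:~R * (- (- m%:Z)%:~R * eta + lam * (m%:Z + 1)%:~R * (- m%:Z)%:~R))
   *: vac); first by lmod_ring.
congr (_ *: _); rewrite /nord_vac_edge /vac_weight /vir_central.
by field; rewrite !natr_neq0.
Qed.

Lemma vir_defect_vac m n : vir_defect m n vac = 0.
Proof.
have [mn_neq0|/eqP mn_eq0] := boolP (m + n != 0); first exact: vir_defect_vac_offdiag.
have -> : n = - m by lia.
have diag_pos (k : nat) : (0 < k)%N -> vir_defect k%:Z (- k%:Z) vac = 0.
  move=> k_gt0; rewrite /vir_defect L_Lneg_vac // (L_singular _ alpha_vac) ?L0 ?addrN ?eqxx;
    last lia.
  by rewrite L0_vac; lmod_ring.
case: (ltrgt0P m) => [m_gt0|m_lt0|->].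
- have e : m = (absz m)%:Z by lia.
  by rewrite e diag_pos //; lia.
- have e : m = - (absz m)%:Z by lia.
  by rewrite vir_defect_antisym e opprK diag_pos ?oppr0 //; lia.
- by rewrite /vir_defect oppr0 addr0 eqxx /vir_central; lmod_ring.
Qed.

Lemma vir_defect_eq0 m n w : vir_defect m n w = 0.
Proof.
case: fockV => _ _ _ _ spanV; have [s ->] := spanV w.
elim: s => [|p s IH]; first by rewrite big_nil (linf0 (vir_defect_lin m n)).
rewrite big_cons (vir_defect_lin m n) IH addr0.
suff -> : vir_defect m n (foldr (fun k w => alpha (- (k.+1)%:Z) w) vac p.2) = 0
  by rewrite scaler0.
by elim: p.2 => [|k t IHt] /=; rewrite ?vir_defect_vac // vir_defect_alpha IHt alpha0.
Qed.

Lemma L_vir_rep : vir_rep (1 - 12%:R * lam ^+ 2) L.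
Proof.
split=> [|m n w]; first exact: L_lin.
by apply/eqP; rewrite -subr_eq0; apply/eqP; exact: vir_defect_eq0.
Qed.

End FockVirasoro.

Lemma vir_rep_block (R : fieldType) (W1 W2 : lmodType R) (c : R)
    (L1 : int -> W1 -> W1) (L2 : int -> W2 -> W2) (phi : int -> W1 -> W2) :
  vir_rep c L1 -> vir_rep c L2 -> (forall n, linear (phi n)) ->
  (forall m n w, (L2 m (phi n w) - phi n (L1 m w)) - (L2 n (phi m w) - phi m (L1 n w))
                 = (m - n)%:~R *: phi (m + n) w) ->
  vir_rep c (fun n (p : W2 * W1) => (L2 n p.1 + phi n p.2, L1 n p.2)).
Proof.
move=> [L1_lin L1_comm] [L2_lin L2_comm] phi_lin phi_comm; split.
  move=> n a [u2 u1] [v2 v1]; apply: injective_projections => /=.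
    by rewrite L2_lin phi_lin; lmod_ring.
  exact: L1_lin.
move=> m n [w2 w1]; apply: injective_projections => /=; last first.
  by rewrite L1_comm; case: ifP.
have /eqP := L2_comm m n w2; rewrite subr_eq => /eqP L2C.
have scale_fst a : (a *: (w2, w1)).1 = a *: w2 by [].
have zero_fst : (0 : W2 * W1).1 = 0 by [].
rewrite !(linfD (L2_lin _)) L2C scalerDr -phi_comm.
by case: ifP => _; rewrite ?scale_fst ?zero_fst; lmod_ring.
Qed.

Section FockIntertwiner.
Variables (R : fieldType) (V1 V2 : lmodType R) (eta1 eta2 lam : R)
  (alpha1 : int -> V1 -> V1) (alpha2 : int -> V2 -> V2) (vac1 : V1) (vac2 : V2)
  (L1 : int -> V1 -> V1) (L2 : int -> V2 -> V2) (phi0 : V1 -> V2).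
Hypotheses (fock1 : heis_fock eta1 alpha1 vac1) (fock2 : heis_fock eta2 alpha2 vac2).
Hypotheses (vir1 : vir_action alpha1 lam L1) (vir2 : vir_action alpha2 lam L2).
Hypothesis phi0_lin : linear phi0.
Hypothesis phi0_L : forall m v, L2 m (phi0 v) = phi0 (L1 m v).
Hypothesis charR : [pchar R] =i pred0.

Definition alpha_comm n v := alpha2 n (phi0 v) - phi0 (alpha1 n v).

Lemma alpha_comm_lin n : linear (alpha_comm n).
Proof.
move=> a u v; rewrite /alpha_comm phi0_lin (alpha_lin fock1) (alpha_lin fock2) phi0_lin.
by lmod_ring.
Qed.

Lemma alpha_comm0 v : alpha_comm 0 v = (eta2 - eta1) *: phi0 v.
Proof. by rewrite /alpha_comm (alpha_zero fock1) (alpha_zero fock2) (linfZ phi0_lin) scalerBl. Qed.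

Lemma L_alpha_comm m n v :
  L2 m (alpha_comm n v) - alpha_comm n (L1 m v) = - n%:~R *: alpha_comm (m + n) v.
Proof.
rewrite /alpha_comm (linfB (L_lin fock2 vir2 m)) phi0_L (L_alpha fock2 vir2) // phi0_L.
rewrite (L_alpha fock1 vir1) // !(linfB phi0_lin, linfD phi0_lin, linfZ phi0_lin).
by lmod_ring.
Qed.

End FockIntertwiner.

Theorem mainTheorem3 (R : fieldType) (hR : [pchar R] =i pred0)
    (V1 V2 : lmodType R) (eta1 eta2 lam : R)
    (alpha1 : int -> V1 -> V1) (alpha2 : int -> V2 -> V2)
    (vac1 : V1) (vac2 : V2)
    (L1 : int -> V1 -> V1) (L2 : int -> V2 -> V2) (phi0 : V1 -> V2) :
  heis_fock eta1 alpha1 vac1 -> heis_fock eta2 alpha2 vac2 ->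
  vir_action alpha1 lam L1 -> vir_action alpha2 lam L2 ->
  (forall a u v, phi0 (a *: u + v) = a *: phi0 u + phi0 v) ->
  (forall m v, L2 m (phi0 v) = phi0 (L1 m v)) ->
  eta1 != eta2 ->
  let k := eta2 - eta1 in
  let phi := fun (n : int) (v : V1) => k^-1 *: (alpha2 n (phi0 v) - phi0 (alpha1 n v)) in
  [/\ (forall v, phi 0 v = phi0 v),
      (forall m n v, L2 m (phi n v) - phi n (L1 m v) = - (n%:~R) *: phi (m + n) v),
      (forall m n v, (L2 m (phi n v) - phi n (L1 m v)) - (L2 n (phi m v) - phi m (L1 n v))
                     = (m - n)%:~R *: phi (m + n) v)
    & vir_rep (1 - 12%:R * lam ^+ 2)
        (fun (n : int) (p : (V2 * V1)%type) => (L2 n p.1 + phi n p.2, L1 n p.2))].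
Proof.
move=> fock1 fock2 vir1 vir2 phi0_lin phi0_L eta_neq k phi.
have phiE n v : phi n v = k^-1 *: alpha_comm alpha1 alpha2 phi0 n v by [].
have k_neq0 : k != 0 by rewrite subr_eq0 eq_sym.
have phi_L m n v : L2 m (phi n v) - phi n (L1 m v) = - (n%:~R) *: phi (m + n) v.
  rewrite !phiE (linfZ (L_lin fock2 vir2 m)) -scalerBr.
  by rewrite (L_alpha_comm fock1 fock2 vir1 vir2 phi0_lin phi0_L hR); lmod_ring.
have phi_comm m n v : (L2 m (phi n v) - phi n (L1 m v)) - (L2 n (phi m v) - phi m (L1 n v))
                      = (m - n)%:~R *: phi (m + n) v.
  by rewrite !phi_L [n + m]addrC; lmod_ring.
split=> //.
  by move=> v; rewrite phiE (alpha_comm0 fock1 fock2 phi0_lin) scalerA mulVf // scale1r.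
apply: vir_rep_block => //; [exact: L_vir_rep fock1 vir1 hR | exact: L_vir_rep fock2 vir2 hR |].
by move=> n a u v; rewrite !phiE (alpha_comm_lin fock1 fock2 phi0_lin); lmod_ring.
Qed.
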